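(* Let $\mathbf{V}\in\mathbb{R}^{n\times k}$ have orthonormal columns. Suppose $\mathbf{W}\in\mathbb{R}^{k\times k}$ satisfies $$\max_{i\in[n]}\Big\{\min_{l\in[k]}\|\mathbf{V}_{i,:}-\mathbf{W}_{l,:}\|\Big\}=\epsilon.$$ Then, provided $\epsilon<(3nk^2)^{-1}$, $$\min_{i,j\in[k],\,i\neq j}\|\mathbf{W}_{i,:}-\mathbf{W}_{j,:}\|\ge\sqrt{\frac{2}{n}}-\sqrt{12}\,k\,(3n\epsilon)^{1/4}.$$
   Context: $[n]=\{1,\dots,n\}$; $\|\cdot\|$ is the Euclidean norm; $\mathbf{V}_{i,:}$ denotes the $i$-th row of $\mathbf{V}$. *)

From HB Require Import structures.
From mathcomp Require Import all_boot all_order all_algebra.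
From mathcomp Require Import reals.
Set Implicit Arguments. Unset Strict Implicit. Unset Printing Implicit Defensive.
Import Order.TTheory GRing.Theory Num.Theory.
Local Open Scope ring_scope.

Definition rnorm (R : rcfType) (k : nat) (v : 'rV[R]_k) : R :=
  Num.sqrt (\sum_(j < k) v 0 j ^+ 2).

Definition rowdist (R : rcfType) (n k : nat) (V : 'M[R]_(n, k)) (W : 'M[R]_k)
  (i : 'I_n) (l : 'I_k) : R := rnorm (row i V - row l W).

(* min_{l in [k]} ||V_{i,:} - W_{l,:}||.  The seed of the fold is an upper bound
   (the max of the same terms), so for k >= 1 this is exactly the minimum. *)
Definition minrowdist (R : rcfType) (n k : nat) (V : 'M[R]_(n, k)) (W : 'M[R]_k)
  (i : 'I_n) : R :=
  \big[Num.min/ \big[Num.max/0]_(l < k) rowdist V W i l]_(l < k) rowdist V W i l.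

(* max_{i in [n]} min_{l in [k]} ||V_{i,:} - W_{l,:}||  (terms are >= 0, so the
   seed 0 is harmless for n >= 1). *)
Definition maxmindist (R : rcfType) (n k : nat) (V : 'M[R]_(n, k)) (W : 'M[R]_k) : R :=
  \big[Num.max/0]_(i < n) minrowdist V W i.

(* Send each row r of V to a nearest row a r of W, so that
   ||V_r - W_(a r)|| <= eps.  Given i != j, pick a unit vector u orthogonal to
   every row of W except W_i, and project everything on u.  The rows of V have
   total squared projection ||V u||^2 = 1 because V has orthonormal columns,
   whereas their proxies W_(a r) project to c = <W_i, u> = <W_i - W_j, u> when
   a r = i and to 0 otherwise.  Comparing the two sums row by row gives
   1 - m_i c^2 <= 2 eps sum_r |<V_r, u>| <= 2 eps sqrt n, where m_i is the
   number of rows sent to i, hence 1 - 2 eps sqrt n <= m_i ||W_i - W_j||^2.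
   Adding the same bound for j and using m_i + m_j <= n yields
   n ||W_i - W_j||^2 >= 2 (1 - 2 eps sqrt n); the stated bound follows since
   eps sqrt n <= sqrt (3 n eps) < 1. *)

From HB Require Import structures.
From mathcomp Require Import all_boot all_order all_algebra.
From mathcomp Require Import reals.
From mathcomp Require Import ring lra.
Import Order.TTheory GRing.Theory Num.Theory.
Local Open Scope ring_scope.

Definition dotr {R : comPzRingType} {k : nat} (u v : 'rV[R]_k) : R :=
  \sum_j u 0 j * v 0 j.

Section DotProduct.
Context {R : comPzRingType} {k : nat}.
Implicit Types u v w : 'rV[R]_k.

Lemma dotrC u v : dotr u v = dotr v u.
Proof. by apply: eq_bigr => j _; rewrite mulrC. Qed.

Lemma dotrBl u v w : dotr (u - v) w = dotr u w - dotr v w.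
Proof. by rewrite -sumrB; apply: eq_bigr => j _; rewrite !mxE mulrBl. Qed.

Lemma dotrZr c u v : dotr u (c *: v) = c * dotr u v.
Proof. by rewrite mulr_sumr; apply: eq_bigr => j _; rewrite mxE mulrCA. Qed.

Lemma dotr_mulmx u v : dotr u v = (u *m v^T) 0 0.
Proof. by rewrite mxE; apply: eq_bigr => j _; rewrite mxE. Qed.

Lemma sum_sqr_dotr_rows n (V : 'M[R]_(n, k)) u :
  V^T *m V = 1%:M -> \sum_r dotr (row r V) u ^+ 2 = dotr u u.
Proof.
move=> VV; have -> : dotr u u = ((V *m u^T)^T *m (V *m u^T)) 0 0.
  by rewrite trmx_mul trmxK mulmxA -(mulmxA u) VV mulmx1 dotr_mulmx.
rewrite mxE; apply: eq_bigr => r _.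
by rewrite [_^T _ _]mxE expr2 dotr_mulmx -row_mul mxE.
Qed.

End DotProduct.

Section RealDotProduct.
Context {R : realDomainType} {k : nat}.
Implicit Types u v : 'rV[R]_k.

Lemma dotr_ge0 v : 0 <= dotr v v.
Proof. by apply: sumr_ge0 => j _; rewrite -expr2 sqr_ge0. Qed.

Lemma dotr_eq0 v : (dotr v v == 0) = (v == 0).
Proof.
apply/idP/eqP => [/eqP v0|->]; last by rewrite /dotr big1 // => j _; rewrite mxE mul0r.
apply/matrixP => i j; rewrite ord1 mxE; apply/eqP; rewrite -sqrf_eq0 expr2; apply/eqP.
by move/psumr_eq0P: v0 => -> // l _; rewrite -expr2 sqr_ge0.
Qed.

Lemma dotr_cauchy_schwarz u v : dotr u v ^+ 2 <= dotr u u * dotr v v.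
Proof.
set A := dotr u u; set B := dotr v v; set C := dotr u v.
have : 0 <= \sum_j (B * u 0 j - C * v 0 j) ^+ 2.
  by apply: sumr_ge0 => j _; apply: sqr_ge0.
have -> : \sum_j (B * u 0 j - C * v 0 j) ^+ 2 = B * (A * B - C ^+ 2).
  rewrite (eq_bigr (fun j => B ^+ 2 * (u 0 j * u 0 j) - 2 * B * C * (u 0 j * v 0 j)
                        + C ^+ 2 * (v 0 j * v 0 j))) => [|j _]; last by ring.
  by rewrite !big_split /= sumrN -!mulr_sumr /A /B /C /dotr; ring.
have [B0|B0] := eqVneq B 0.
  have v0 : v = 0 by apply/eqP; rewrite -dotr_eq0 -/B B0.
  by rewrite B0 mulr0 /C v0 /dotr big1 ?expr0n // => j _; rewrite mxE mulr0.
by rewrite pmulr_rge0 ?subr_ge0 // lt0r B0 dotr_ge0.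
Qed.

End RealDotProduct.

Lemma exists_row_orthogonal {F : fieldType} {k : nat} (W : 'M[F]_k) (i : 'I_k) :
  exists2 v : 'rV[F]_k, v != 0 & forall l, l != i -> dotr (row l W) v = 0.
Proof.
pose Wi := \matrix_(l, j) (if l == i then 0 else W l j).
have /det0P[v v_neq0 vWi] : \det Wi^T == 0.
  by rewrite det_tr (expand_det_row _ i) big1 // => j _; rewrite mxE eqxx mul0r.
exists v => // l li; move/matrixP/(_ 0 l): vWi; rewrite !mxE => <-.
by apply: eq_bigr => j _; rewrite !mxE (negbTE li) mulrC.
Qed.

Section Rnorm.
Context {R : rcfType} {k : nat}.
Implicit Types u v : 'rV[R]_k.

Lemma rnormE v : rnorm v = Num.sqrt (dotr v v).
Proof. by congr Num.sqrt; apply: eq_bigr => j _; rewrite expr2. Qed.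

Lemma rnorm_sqr v : rnorm v ^+ 2 = dotr v v.
Proof. by rewrite rnormE sqr_sqrtr ?dotr_ge0. Qed.

Lemma rnorm_distC u v : rnorm (u - v) = rnorm (v - u).
Proof. by rewrite -opprB /rnorm; congr Num.sqrt; apply: eq_bigr => j _; rewrite mxE sqrrN. Qed.

Lemma norm_dotr_le u v : dotr u u = 1 -> `|dotr v u| <= rnorm v.
Proof.
move=> u1; rewrite -sqrtr_sqr rnormE ler_wsqrtr //.
by rewrite -[dotr v v]mulr1 -u1 dotr_cauchy_schwarz.
Qed.

Lemma exists_unit_row_orthogonal (W : 'M[R]_k) (i : 'I_k) :
  exists2 u : 'rV[R]_k, dotr u u = 1 & forall l, l != i -> dotr (row l W) u = 0.
Proof.
have [v v_neq0 v_orth] := exists_row_orthogonal W i.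
have vv_gt0 : 0 < dotr v v by rewrite lt0r dotr_eq0 v_neq0 dotr_ge0.
exists ((rnorm v)^-1 *: v) => [|l li]; last by rewrite dotrZr v_orth ?mulr0.
rewrite dotrZr dotrC dotrZr mulrA -expr2 exprVn rnorm_sqr mulVf //.
by rewrite gt_eqF.
Qed.

End Rnorm.

Lemma sumr_norm_le_sqrt {R : rcfType} {n : nat} (x : 'I_n -> R) :
  \sum_r `|x r| <= Num.sqrt n%:R * Num.sqrt (\sum_r x r ^+ 2).
Proof.
rewrite -sqrtrM ?ler0n // -[leLHS]ger0_norm ?sumr_ge0 // -sqrtr_sqr ler_wsqrtr //.
have := dotr_cauchy_schwarz (const_mx 1 : 'rV[R]_n) (\row_r `|x r|).
congr (_ <= _ * _); rewrite /dotr.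
- by congr (_ ^+ 2); apply: eq_bigr => r _; rewrite !mxE mul1r.
- by rewrite (eq_bigr (fun _ => 1)) => [|r _]; rewrite ?sumr_const ?card_ord // !mxE mulr1.
- by apply: eq_bigr => r _; rewrite !mxE -expr2 real_normK ?num_real.
Qed.

Section MaxMinDist.
Context {R : rcfType} {n k : nat} (V : 'M[R]_(n, k)) (W : 'M[R]_k).

Lemma maxmindist_ge0 : 0 <= maxmindist V W.
Proof. exact: bigmax_ge_id. Qed.

Lemma rowdist_arg_min (l0 : 'I_k) (r : 'I_n) :
  rowdist V W r [arg min_(l < l0) rowdist V W r l]%O = minrowdist V W r.
Proof. by rewrite /minrowdist (bigmin_eq_arg _ l0) // => l _; apply: le_bigmax. Qed.

Lemma rowdist_arg_min_le (l0 : 'I_k) (r : 'I_n) :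
  rowdist V W r [arg min_(l < l0) rowdist V W r l]%O <= maxmindist V W.
Proof. by rewrite rowdist_arg_min; apply: le_bigmax. Qed.

End MaxMinDist.

Lemma subr_sqr_le {R : realDomainType} (x y e : R) :
  `|x - y| <= e -> x ^+ 2 - y ^+ 2 <= 2 * `|x| * e.
Proof.
move=> xy_le; have -> : x ^+ 2 - y ^+ 2 = 2 * (x * (x - y)) - (x - y) ^+ 2 by ring.
have : x * (x - y) <= `|x| * e.
  by apply: le_trans (ler_norm _) _; rewrite normrM ler_wpM2l.
have := sqr_ge0 (x - y); lra.
Qed.

Section Separation.
Context {R : rcfType} {n k : nat} (V : 'M[R]_(n, k)) (W : 'M[R]_k).
Variables (a : 'I_n -> 'I_k) (eps : R).
Hypothesis eps_ge0 : 0 <= eps.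
Hypothesis V_orthonormal : V^T *m V = 1%:M.
Hypothesis row_close : forall r, rnorm (row r V - row (a r) W) <= eps.

Lemma card_fiber_lower_bound (i j : 'I_k) : i != j ->
  1 - 2 * eps * Num.sqrt n%:R
    <= #|[set r | a r == i]|%:R * rnorm (row i W - row j W) ^+ 2.
Proof.
move=> ij; have [u u_unit u_orth] := exists_unit_row_orthogonal W i.
set c := dotr (row i W) u.
pose x r := dotr (row r V) u.
pose y r := dotr (row (a r) W) u.
have sum_x : \sum_r x r ^+ 2 = 1 by rewrite sum_sqr_dotr_rows.
have sum_y : \sum_r y r ^+ 2 = #|[set r | a r == i]|%:R * c ^+ 2.
  rewrite (bigID (fun r => a r == i)) /= [X in _ + X]big1 => [|r /negbTE ari]; last first.
    by rewrite /y u_orth ?ari // expr0n.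
  rewrite addr0 (eq_bigr (fun _ => c ^+ 2)) => [|r /eqP ari]; last by rewrite /y ari.
  by rewrite sumr_const mulr_natl cardsE.
have xy_close r : `|x r - y r| <= eps.
  by rewrite /x /y -dotrBl; apply: le_trans (norm_dotr_le _ _ u_unit) (row_close r).
have c_le : c ^+ 2 <= rnorm (row i W - row j W) ^+ 2.
  have -> : c = dotr (row i W - row j W) u by rewrite dotrBl (u_orth j) ?subr0 // eq_sym.
  by rewrite rnorm_sqr -[leRHS]mulr1 -u_unit dotr_cauchy_schwarz.
have sum_abs_x : \sum_r `|x r| <= Num.sqrt n%:R.
  by apply: le_trans (sumr_norm_le_sqrt x) _; rewrite sum_x sqrtr1 mulr1.
have : \sum_r (x r ^+ 2 - y r ^+ 2) <= 2 * eps * Num.sqrt n%:R.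
  apply: le_trans (_ : _ <= \sum_r 2 * `|x r| * eps) _.
    by apply: ler_sum => r _; apply: subr_sqr_le.
  by rewrite -mulr_suml -mulr_sumr mulrAC ler_wpM2l ?mulr_ge0.
rewrite sumrB sum_x sum_y => sum_le.
have : #|[set r | a r == i]|%:R * c ^+ 2
         <= #|[set r | a r == i]|%:R * rnorm (row i W - row j W) ^+ 2.
  by rewrite ler_wpM2l.
lra.
Qed.

Lemma sqr_rnorm_row_sub_lower_bound (i j : 'I_k) : i != j ->
  2 * (1 - 2 * eps * Num.sqrt n%:R) <= n%:R * rnorm (row i W - row j W) ^+ 2.
Proof.
move=> ij; have := card_fiber_lower_bound i j ij.
set D := rnorm (row i W - row j W) ^+ 2 => lower_i.
have := card_fiber_lower_bound j i; rewrite eq_sym rnorm_distC -/D => /(_ ij) lower_j.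
have cards_le : (#|[set r | a r == i]| + #|[set r | a r == j]| <= n)%N.
  rewrite -cardsUI [_ :&: _](_ : _ = set0) ?cards0 ?addn0.
    by apply: leq_trans (max_card _) _; rewrite card_ord.
  by apply/setP => r; rewrite !inE; case: eqP => // ->; rewrite (negbTE ij).
have : (#|[set r | a r == i]| + #|[set r | a r == j]|)%:R * D <= n%:R * D.
  by rewrite ler_wpM2r ?ler_nat // /D sqr_ge0.
rewrite natrD mulrDl; lra.
Qed.

End Separation.

Lemma separation_bound (R : rcfType) (N K e D : R) :
  1 <= N -> 1 <= K -> 0 <= e -> 3 * N * e < 1 -> 0 <= D ->
  2 * (1 - 2 * e * Num.sqrt N) <= N * D ^+ 2 ->
  Num.sqrt (2 / N) - Num.sqrt 12 * K * Num.sqrt (Num.sqrt (3 * N * e)) <= D.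
Proof.
move=> N_ge1 K_ge1 e_ge0 Ne_lt1 D_ge0 D_lower.
set s := Num.sqrt (3 * N * e); set t := Num.sqrt s; set g := Num.sqrt (2 / N).
have s_sqr : s ^+ 2 = 3 * N * e by rewrite sqr_sqrtr //; nra.
have s_ge0 : 0 <= s := sqrtr_ge0 _.
have t_ge0 : 0 <= t := sqrtr_ge0 _.
have g_ge0 : 0 <= g := sqrtr_ge0 _.
have t_sqr : t ^+ 2 = s by rewrite sqr_sqrtr.
have g_sqr : g ^+ 2 * N = 2 by rewrite sqr_sqrtr ?divfK ?gt_eqF ?divr_ge0 //; lra.
have s_le1 : s <= 1 by nra.
have e_sqrtN : e * Num.sqrt N <= s.
  rewrite -[e]ger0_norm // -sqrtr_sqr -sqrtrM ?sqr_ge0 // ler_wsqrtr //; nra.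
have sqrt12_ge3 : 3 <= Num.sqrt (12 : R).
  by rewrite -[3 : R]ger0_norm // -sqrtr_sqr ler_wsqrtr //; lra.
have loss_le : g - Num.sqrt 12 * K * t <= g * (1 - 2 * s).
  have g_le : g <= 3 / 2 by nra.
  have : 3 * t <= Num.sqrt 12 * K * t.
    by rewrite ler_wpM2r // -[3]mulr1 ler_pM //; lra.
  nra.
apply: le_trans loss_le _.
have [s_large|s_small] := lerP (1 - 2 * s) 0.
  by apply: le_trans D_ge0; nra.
have gs_ge0 : 0 <= g * (1 - 2 * s) by rewrite mulr_ge0 // ltW.
rewrite -[D]ger0_norm // -[leLHS]ger0_norm // -!sqrtr_sqr ler_wsqrtr //.
rewrite -(ler_pM2r (_ : 0 < N)); last by lra.
rewrite exprMn mulrAC g_sqr; nra.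
Qed.

Theorem proposition5 (R : realType) (n k : nat) (V : 'M[R]_(n, k)) (W : 'M[R]_k)
  (eps : R) :
  V^T *m V = 1%:M ->
  maxmindist V W = eps ->
  eps < (3 * n%:R * k%:R ^+ 2)^-1 ->
  forall i j : 'I_k, i != j ->
    Num.sqrt (2 / n%:R) - Num.sqrt 12 * k%:R * Num.sqrt (Num.sqrt (3 * n%:R * eps))
      <= rnorm (row i W - row j W).
Proof.
move=> V_orthonormal <- eps_lt i j ij.
pose a r := [arg min_(l < i) rowdist V W r l]%O.
have eps_ge0 := maxmindist_ge0 V W.
have k_ge1 : 1 <= k%:R :> R by rewrite ler1n (leq_ltn_trans _ (ltn_ord i)).
have n_ge1 : 1 <= n%:R :> R.
  rewrite ler1n lt0n; apply/negP => /eqP n0.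
  have n0R : n%:R = 0 :> R by rewrite n0.
  by move: eps_lt; rewrite n0R mulr0 mul0r invr0 ltNge eps_ge0.
have Ne_lt1 : 3 * n%:R * maxmindist V W < 1.
  have k2_ge1 : 1 <= k%:R ^+ 2 :> R by rewrite expr_ge1 //; lra.
  move: eps_lt; rewrite -div1r ltr_pdivlMr; last by rewrite !mulr_gt0 //; lra.
  nra.
apply: separation_bound => //; first exact: sqrtr_ge0.
apply: (sqr_rnorm_row_sub_lower_bound V W a) => // r.
exact: rowdist_arg_min_le.
Qed.
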